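(* Let $n\ge2$ and let $S_1,\dots,S_n$ be isometries on an infinite-dimensional Hilbert space $H$ with $\sum_{i=1}^n S_iS_i^*=1_H$; let $O_n\subseteq B(H)$ be the C$^*$-algebra they generate. Let $\Phi_n(x)=\sum_{i=1}^n S_ixS_i^*$ and $\Psi_n(x)=\frac1n\sum_{i=1}^n S_i^*xS_i$ ($x\in O_n$); $\Psi_n$ is the adjoint of $\Phi_n$ with respect to the state $\phi_n$. Then: (i) $\Phi_n$ is not irreducible, i.e. $\Phi_n(O_n)'$ is not equal to the scalar operators $\mathbb{C}1_H$. (ii) $\Phi_n$ is an operational extreme point, but not a numerical operational extreme point, of the set of completely positive maps $O_n\to O_n$. (iii) $\Psi_n$ is not an operational extreme point of the set of completely positive maps $O_n\to O_n$; moreover, $\Psi_n$ is not a Jordan homomorphism.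
   Context: Commutants are taken in $B(H)$. $\mathrm{Ad}\, v(x)=vxv^*$. For the set $S$ of completely positive maps $O_n\to O_n$: a map $\Phi\in S$ is an operational extreme point of $S$ if whenever $\Phi=\sum_{i=1}^m\mathrm{Ad}\,a_i\circ\Psi_i$ with $\Psi_i\in S$ and nonzero $a_1,\dots,a_m\in O_n$ with $\sum_i a_ia_i^*=1$, there exist $z_i\in\Phi(O_n)'$ with $\mathrm{Ad}\,a_i\circ\Psi_i=z_i\Phi$ for all $i$; it is a numerical operational extreme point if in every such decomposition the $z_i$ can be taken to be nonnegative real scalars. A self-adjoint linear map $\Phi$ is a Jordan homomorphism if $\Phi(a^2)=\Phi(a)^2$ for all self-adjoint $a$. $\phi_n$ is the unique state on $O_n$ with $\phi_n(ab)=\phi_n(ba)$ for $a\in O_n$ and $b$ in the closed span of $\{S_\mu S_\nu^*: |\mu|=|\nu|\}$. *)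

From HB Require Import structures.
From mathcomp Require Import all_boot all_order all_algebra.
From mathcomp Require Import reals complex.
From Stdlib Require Import ClassicalEpsilon.

Set Implicit Arguments.
Unset Strict Implicit.
Unset Printing Implicit Defensive.

Import Order.TTheory GRing.Theory Num.Theory.
Local Open Scope ring_scope.

Section Hilbert.
Variable R : realType.
Local Notation C := (R[i]).
Variable V : lmodType C.
Variable ip : V -> V -> C.   (* inner product, linear in the first variable *)

Definition is_hilbert : Prop :=
  [/\ (forall (a : C) (x y z : V), ip (a *: x + y) z = a * ip x z + ip y z),
      (forall x y : V, ip x y = (ip y x)^*),
      (forall x : V, 0 <= ip x x),
      (forall x : V, ip x x = 0 -> x = 0) &
      (forall u : nat -> V,
         (forall eps : C, 0 < eps -> exists N : nat, forall m n : nat,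
             (N <= m)%N -> (N <= n)%N -> ip (u m - u n) (u m - u n) < eps) ->
         exists l : V, forall eps : C, 0 < eps -> exists N : nat, forall n : nat,
             (N <= n)%N -> ip (u n - l) (u n - l) < eps)].

Definition infinite_dim : Prop :=
  forall n : nat, exists v : 'I_n -> V, forall c : 'I_n -> C,
    \sum_(i < n) c i *: v i = 0 -> forall i, c i = 0.

Definition op := V -> V.

Definition linear_op (T : op) : Prop :=
  forall (a : C) (x y : V), T (a *: x + y) = a *: T x + T y.

Definition bounded_op (T : op) : Prop :=
  linear_op T /\ exists M : C, forall x : V, ip (T x) (T x) <= M * ip x x.

Definition is_adjoint (T T' : op) : Prop :=
  forall x y : V, ip (T x) y = ip x (T' y).

(* the Hilbert space adjoint T^* (exists for bounded T by Riesz) *)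
Definition adj (T : op) : op :=
  epsilon (inhabits (fun x : V => x)) (fun T' => is_adjoint T T').

Definition idop : op := fun x => x.
Definition addop (T U : op) : op := fun x => T x + U x.
Definition scaleop (c : C) (T : op) : op := fun x => c *: T x.
Definition mulop (T U : op) : op := fun x => T (U x).

(* ||T - U|| <= eps (operator norm), stated with squares *)
Definition op_close (T U : op) (eps : C) : Prop :=
  forall x : V, ip (T x - U x) (T x - U x) <= eps ^+ 2 * ip x x.

Definition closed_star_subalg (P : op -> Prop) : Prop :=
  (forall T, P T -> bounded_op T) /\
  [/\ (forall T U, P T -> P U -> P (addop T U)),
      (forall c T, P T -> P (scaleop c T)),
      (forall T U, P T -> P U -> P (mulop T U)),
      (forall T, P T -> P (adj T)) &
      (forall T, bounded_op T ->
         (forall eps : C, 0 < eps -> exists U, P U /\ op_close T U eps) -> P T)].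

Definition cstar_gen (I : Type) (S : I -> op) (T : op) : Prop :=
  forall P : op -> Prop, closed_star_subalg P -> (forall i, P (S i)) -> P T.

Definition eq_on (A : op -> Prop) (F G : op -> op) : Prop :=
  forall x, A x -> F x = G x.

Definition linear_on (A : op -> Prop) (F : op -> op) : Prop :=
  forall (c : C) x y, A x -> A y ->
    F (addop (scaleop c x) y) = addop (scaleop c (F x)) (F y).

Definition pos_mx (k : nat) (X : 'I_k -> 'I_k -> op) : Prop :=
  forall xi : 'I_k -> V, 0 <= \sum_(i < k) \sum_(j < k) ip (X i j (xi j)) (xi i).

Definition cp_map (A : op -> Prop) (F : op -> op) : Prop :=
  [/\ (forall x, A x -> A (F x)),
      linear_on A F &
      (forall (k : nat) (X : 'I_k -> 'I_k -> op),
         (forall i j, A (X i j)) -> pos_mx X -> pos_mx (fun i j => F (X i j)))].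

Definition commutant_range (A : op -> Prop) (F : op -> op) (z : op) : Prop :=
  bounded_op z /\ forall x, A x -> mulop z (F x) = mulop (F x) z.

Definition scalar_op (z : op) : Prop := exists c : C, z = scaleop c idop.

Definition Ad (a : op) (x : op) : op := mulop a (mulop x (adj a)).

Definition cp_decomposition (A : op -> Prop) (F : op -> op)
    (m : nat) (a : 'I_m -> op) (Psi : 'I_m -> op -> op) : Prop :=
  [/\ (forall i, cp_map A (Psi i)),
      (forall i, A (a i)),
      (forall i, a i <> (fun _ => 0)),
      (fun v => \sum_(i < m) a i (adj (a i) v)) = idop &
      eq_on A F (fun x v => \sum_(i < m) Ad (a i) (Psi i x) v)].

Definition operational_extreme (A : op -> Prop) (F : op -> op) : Prop :=
  cp_map A F /\
  forall (m : nat) (a : 'I_m -> op) (Psi : 'I_m -> op -> op),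
    cp_decomposition A F a Psi ->
    exists z : 'I_m -> op, forall i, commutant_range A F (z i) /\
      eq_on A (fun x => Ad (a i) (Psi i x)) (fun x => mulop (z i) (F x)).

Definition numerical_operational_extreme (A : op -> Prop) (F : op -> op) : Prop :=
  cp_map A F /\
  forall (m : nat) (a : 'I_m -> op) (Psi : 'I_m -> op -> op),
    cp_decomposition A F a Psi ->
    exists lam : 'I_m -> C, forall i, 0 <= lam i /\
      eq_on A (fun x => Ad (a i) (Psi i x)) (fun x => scaleop (lam i) (F x)).

Definition jordan_hom (A : op -> Prop) (F : op -> op) : Prop :=
  [/\ (forall x, A x -> F (adj x) = adj (F x)),
      linear_on A F &
      (forall x, A x -> adj x = x -> F (mulop x x) = mulop (F x) (F x))].

Definition PhiN (n : nat) (S : 'I_n -> op) (x : op) : op :=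
  fun v => \sum_(i < n) S i (x (adj (S i) v)).

Definition PsiN (n : nat) (S : 'I_n -> op) (x : op) : op :=
  fun v => (n%:R)^-1 *: \sum_(i < n) adj (S i) (x (S i v)).

End Hilbert.

(* Since [S_i^* S_j = delta_ij], [Phi_n] is a unital *-endomorphism of [O_n] with
   [S_i x = Phi_n(x) S_i], so the range projections [S_i S_i^*] lie in [Phi_n(O_n)'] without
   being scalar.  A completely positive summand [theta] of a unital *-homomorphism [Phi] satisfies
   [theta(x) = theta(1) Phi(x) = Phi(x) theta(1)]: applied to the positive matrix
   [[1, x], [x^*, x^* x]] it yields a nonnegative quadratic form in [u] which, summed over the
   decomposition, vanishes at [u = - Phi(x) w]; hence its linear part vanishes.  In the
   decomposition [Phi_n = \sum_i Ad S_i] the summand [Ad S_1] maps [1] to [S_1 S_1^*], which is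
   not scalar.  Writing [Psi_n = \sum_i Ad (n^-1/2) o Ad S_i^*], the first summand forces
   [z_1 = 1/n] at [1] but vanishes at [S_2 S_2^*], where [Psi_n] is [1/n]; and [Psi_n] sends the
   projection [S_1 S_1^*] to [1/n], whose square is [1/n^2].  Adjoints of the elements of [O_n]
   are provided by the Riesz representation theorem, obtained from a best approximation in the
   kernel of a bounded functional. *)

From HB Require Import structures.
From mathcomp Require Import all_boot all_order all_algebra.
From mathcomp Require Import reals complex.
From mathcomp Require Import ring lra.
From mathcomp Require Import boolp classical_sets.
From Stdlib Require Import ClassicalEpsilon.
Import Order.TTheory GRing.Theory Num.Theory.
Local Open Scope ring_scope.
Set Implicit Arguments.
Unset Strict Implicit.
Unset Printing Implicit Defensive.

Section Scalars.
Variable R : realType.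
Local Notation C := R[i].

Lemma ge0_quadr_lin_eq0 (b c : R) : (forall s : R, 0 <= s * b + s ^+ 2 * c) -> b = 0.
Proof.
move=> H; have H1 := H 1; have H2 := H (-1).
have c1_gt0 : 0 < c + 1 by nra.
pose u := (c + 1)^-1.
have u_gt0 : 0 < u by rewrite invr_gt0.
have uc : u * c = 1 - u by rewrite -[1](mulVf (lt0r_neq0 c1_gt0)) -/u; ring.
have : 0 <= - (b * u) ^+ 2.
  have -> : - (b * u) ^+ 2 = (- b * u) * b + (- b * u) ^+ 2 * c.
    transitivity (- (b ^+ 2 * u) + b ^+ 2 * u * (u * c)); last by ring.
    by rewrite uc; ring.
  exact: H.
move=> h; have : b * u = 0 by nra.
by move/eqP; rewrite mulf_eq0 (gt_eqF u_gt0) orbF => /eqP.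
Qed.

Lemma ge0_quadC_lin_eq0 (a b c : C) :
  (forall t : C, 0 <= t^* * a + t * b + t * t^* * c) -> a = 0 /\ b = 0.
Proof.
case: a => a1 a2; case: b => b1 b2; case: c => c1 c2 H.
have Hre s : 0 <= s * (a1 + b1) + s ^+ 2 * c1 /\ s * (a2 + b2) + s ^+ 2 * c2 = 0.
  by move: (H (Complex s 0)); rewrite lecE /= => /andP[/eqP ? ?]; split; nra.
have Him s : 0 <= s * (a2 - b2) + s ^+ 2 * c1 /\ s * (b1 - a1) + s ^+ 2 * c2 = 0.
  by move: (H (Complex 0 s)); rewrite lecE /= => /andP[/eqP ? ?]; split; nra.
have r1 : a1 + b1 = 0 by apply: (@ge0_quadr_lin_eq0 _ c1) => s; case: (Hre s).
have r2 : a2 - b2 = 0 by apply: (@ge0_quadr_lin_eq0 _ c1) => s; case: (Him s).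
have [_ i1] := Hre 1; have [_ i2] := Hre (-1).
have [_ i3] := Him 1; have [_ i4] := Him (-1).
have -> : a1 = 0 by nra. have -> : b1 = 0 by nra.
have -> : a2 = 0 by nra. have -> : b2 = 0 by nra.
by [].
Qed.

Definition abs2 (a : C) : R := complex.Re a ^+ 2 + complex.Im a ^+ 2.

Lemma mulC_conj_abs2 (a : C) : a * a^* = (abs2 a)%:C%C.
Proof.
by case: a => a b; apply/eqP; rewrite eq_complex /abs2 /=; apply/andP; split; apply/eqP; ring.
Qed.

Lemma abs2_ge0 (a : C) : 0 <= abs2 a.
Proof. by rewrite addr_ge0 ?sqr_ge0. Qed.

Lemma abs2_eq0 (a : C) : abs2 a = 0 -> a = 0.
Proof.
case: a => a b /eqP; rewrite paddr_eq0 ?sqr_ge0 // !sqrf_eq0 /=.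
by case/andP => /eqP -> /eqP ->.
Qed.

Lemma abs2N (a : C) : abs2 (- a) = abs2 a.
Proof. by case: a => a b; rewrite /abs2 /=; ring. Qed.

Lemma abs2_real (r : R) : abs2 r%:C%C = r ^+ 2.
Proof. by rewrite /abs2 /= expr0n addr0. Qed.

Lemma inv_succ_lt (eps : R) :
  0 < eps -> exists N, forall n, (N <= n)%N -> (n.+1%:R : R)^-1 < eps.
Proof.
move=> eps_gt0; exists (Num.truncn eps^-1) => n le_Nn.
rewrite -[eps]invrK ltf_pV2 ?posrE ?invr_gt0 ?ltr0Sn //.
apply: lt_le_trans (truncnS_gt _) _.
by rewrite ler_nat ltnS.
Qed.

End Scalars.

Section LinearMaps.
Variables (K : pzRingType) (U W : lmodType K) (f : U -> W).
Hypothesis f_lin : forall a x y, f (a *: x + y) = a *: f x + f y.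

Lemma linop0 : f 0 = 0.
Proof.
have := f_lin 1 0 0; rewrite scaler0 addr0 scale1r => h.
by apply: (@addrI _ (f 0)); rewrite -h addr0.
Qed.

Lemma linopD x y : f (x + y) = f x + f y.
Proof. by rewrite -[x]scale1r f_lin !scale1r. Qed.

Lemma linopZ a x : f (a *: x) = a *: f x.
Proof. by rewrite -[a *: x]addr0 f_lin linop0 addr0. Qed.

Lemma linopN x : f (- x) = - f x.
Proof. by rewrite -scaleN1r linopZ scaleN1r. Qed.

Lemma linopB x y : f (x - y) = f x - f y.
Proof. by rewrite linopD linopN. Qed.

Lemma linop_sum k (F : 'I_k -> U) : f (\sum_(j < k) F j) = \sum_(j < k) f (F j).
Proof. exact: (big_morph f linopD linop0). Qed.

End LinearMaps.

Section InnerProduct.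
Variable R : realType.
Local Notation C := R[i].
Variable V : lmodType C.
Variable ip : V -> V -> C.
Hypothesis Hh : is_hilbert ip.

Lemma ip_linl z : forall a x y,
  (ip^~ z : V -> C^o) (a *: x + y) = a *: ip x z + ip y z.
Proof. by case: Hh => h _ _ _ _ a x y; exact: h. Qed.

Lemma ipC x y : ip x y = (ip y x)^*.
Proof. by case: Hh. Qed.

Lemma ip_ge0 x : 0 <= ip x x.
Proof. by case: Hh. Qed.

Lemma ip_eq0 x : ip x x = 0 -> x = 0.
Proof. by case: Hh => _ _ _ h _; exact: h. Qed.

Lemma ip0l z : ip 0 z = 0. Proof. exact: (linop0 (ip_linl z)). Qed.
Lemma ipDl x y z : ip (x + y) z = ip x z + ip y z. Proof. exact: (linopD (ip_linl z) x y). Qed.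
Lemma ipZl a x z : ip (a *: x) z = a * ip x z. Proof. exact: (linopZ (ip_linl z) a x). Qed.
Lemma ipNl x z : ip (- x) z = - ip x z. Proof. exact: (linopN (ip_linl z) x). Qed.
Lemma ip_suml k (F : 'I_k -> V) z : ip (\sum_(i < k) F i) z = \sum_(i < k) ip (F i) z.
Proof. exact: (linop_sum (ip_linl z) F). Qed.

Lemma ip0r z : ip z 0 = 0. Proof. by rewrite ipC ip0l rmorph0. Qed.
Lemma ipDr x y z : ip x (y + z) = ip x y + ip x z.
Proof. by rewrite ipC ipDl rmorphD /= -!ipC. Qed.
Lemma ipZr a x z : ip x (a *: z) = a^* * ip x z.
Proof. by rewrite ipC ipZl rmorphM /= -ipC. Qed.
Lemma ipNr x z : ip x (- z) = - ip x z.
Proof. by rewrite ipC ipNl rmorphN /= -ipC. Qed.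
Lemma ipBr x y z : ip x (y - z) = ip x y - ip x z.
Proof. by rewrite ipDr ipNr. Qed.
Lemma ip_sumr k (F : 'I_k -> V) z : ip z (\sum_(i < k) F i) = \sum_(i < k) ip z (F i).
Proof. exact: (big_morph (ip z) (ipDr z) (ip0r z)). Qed.

Lemma ip_inj_r x y : (forall z, ip z x = ip z y) -> x = y.
Proof. by move=> h; apply/subr0_eq/ip_eq0; rewrite ipBr h subrr. Qed.

Lemma ip_inj_l x y : (forall z, ip x z = ip y z) -> x = y.
Proof. by move=> h; apply: ip_inj_r => z; rewrite ipC h -ipC. Qed.

Lemma ip_expand x y t : ip (x + t *: y) (x + t *: y) =
  ip x x + t^* * ip x y + t * (ip x y)^* + t * t^* * ip y y.
Proof. by rewrite ipDl !ipDr !ipZl !ipZr [ip y x]ipC; ring. Qed.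

Definition normsq x : R := complex.Re (ip x x).

Lemma ip_normsq x : ip x x = (normsq x)%:C%C.
Proof.
by rewrite /normsq; have := ip_ge0 x; case: (ip x x) => a b; rewrite lecE /= => /andP[/eqP -> _].
Qed.

Lemma normsq_ge0 x : 0 <= normsq x.
Proof. by have := ip_ge0 x; rewrite ip_normsq lecR. Qed.

Lemma normsq_eq0 x : normsq x = 0 -> x = 0.
Proof. by move=> h; apply: ip_eq0; rewrite ip_normsq h. Qed.

Lemma normsqD x y : normsq (x + y) = normsq x + normsq y + 2 * complex.Re (ip x y).
Proof.
rewrite /normsq ipDl !ipDr [ip y x]ipC.
by case: (ip x x) (ip x y) (ip y y) => ? ? [? ?] [? ?] /=; ring.
Qed.

Lemma normsqN x : normsq (- x) = normsq x.
Proof. by rewrite /normsq ipNl ipNr opprK. Qed.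

Lemma normsqZ a x : normsq (a *: x) = abs2 a * normsq x.
Proof. by rewrite /normsq ipZl ipZr ip_normsq mulrA mulC_conj_abs2 /= mulr0 subr0. Qed.

Lemma normsq_parallelogram x y : normsq (x + y) + normsq (x - y) = 2 * normsq x + 2 * normsq y.
Proof. by rewrite !normsqD normsqN ipNr; case: (ip x y) => ? ? /=; lra. Qed.

Lemma normsqD_le x y (s : R) :
  0 < s -> normsq (x + y) <= (1 + s) * normsq x + (1 + s^-1) * normsq y.
Proof.
move=> s_gt0; have si_gt0 : 0 < s^-1 by rewrite invr_gt0.
have := normsq_ge0 (s%:C%C *: x - y).
rewrite normsqD; rewrite normsqD normsqN normsqZ abs2_real ipNr ipZl.
have : complex.Re (- (s%:C%C * ip x y)) = - (s * complex.Re (ip x y)).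
  by case: (ip x y) => ? ? /=; rewrite mul0r subr0.
move=> -> h.
have : 0 <= s^-1 * (s ^+ 2 * normsq x + normsq y + 2 * - (s * complex.Re (ip x y))).
  by rewrite mulr_ge0 // ltW.
move: (normsq x) (normsq y) (complex.Re _) => nx ny a.
have -> : s^-1 * (s ^+ 2 * nx + ny + 2 * - (s * a)) = s * nx + s^-1 * ny - 2 * a.
  by field; rewrite gt_eqF.
lra.
Qed.

Lemma cauchy_schwarz x y : abs2 (ip x y) <= normsq x * normsq y.
Proof.
have [ny0|ny_neq0] := eqVneq (normsq y) 0.
  by rewrite ny0 (normsq_eq0 ny0) ip0r /abs2 /= mulr0 expr0n /= addr0.
have ny_gt0 : 0 < normsq y by rewrite lt_neqAle eq_sym ny_neq0 normsq_ge0.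
pose u := (normsq y)^-1.
have uny : u * normsq y = 1 by rewrite mulVf.
have u_gt0 : 0 < u by rewrite invr_gt0.
have := ip_ge0 (x + ((- u)%:C%C * ip x y) *: y).
rewrite ip_expand !ip_normsq /abs2.
case: (ip x y) => a b; rewrite lecE /= => /andP[_ h].
have : a ^+ 2 + b ^+ 2 = normsq y * (u * (a ^+ 2 + b ^+ 2)) by rewrite mulrA [_ * u]mulrC uny mul1r.
have := normsq_ge0 x.
move: (normsq x) (normsq y) u uny u_gt0 h => nx ny w *; nra.
Qed.

End InnerProduct.

Section Riesz.
Variable R : realType.
Local Notation C := R[i].
Variable V : lmodType C.
Variable ip : V -> V -> C.
Hypothesis Hh : is_hilbert ip.
Local Notation normsq := (normsq ip).

Definition normsq_cvg (u : nat -> V) (l : V) : Prop :=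
  forall eps : R, 0 < eps -> exists N, forall n, (N <= n)%N -> normsq (u n - l) < eps.

Definition normsq_cauchy (u : nat -> V) : Prop :=
  forall eps : R, 0 < eps -> exists N, forall m n,
    (N <= m)%N -> (N <= n)%N -> normsq (u m - u n) < eps.

Lemma normsq_cauchy_cvg u : normsq_cauchy u -> exists l, normsq_cvg u l.
Proof.
have ltC (r : R) (eps : C) : 0 < eps -> r < complex.Re eps -> r%:C%C < eps.
  by case: eps => a b; rewrite !ltcE /= => /andP[/eqP -> _] ->; rewrite eqxx.
move=> u_cauchy; have [_ _ _ _ complete] := Hh.
have [l ul] : exists l, forall eps : C, 0 < eps -> exists N, forall n,
    (N <= n)%N -> ip (u n - l) (u n - l) < eps.
  apply: complete => eps eps_gt0.
  have : 0 < complex.Re eps.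
    by move: eps_gt0; case: eps => a b; rewrite ltcE /= => /andP[_ ->].
  case/u_cauchy => N uN; exists N => m n le_Nm le_Nn.
  by rewrite ip_normsq //; apply: ltC => //; exact: uN.
exists l => eps eps_gt0.
have [N lN] : exists N, forall n, (N <= n)%N -> ip (u n - l) (u n - l) < eps%:C%C.
  by apply: ul; rewrite ltcR.
by exists N => n /lN; rewrite ip_normsq // ltcR.
Qed.

Lemma normsq_sub_le_near_inf (K : V -> Prop) x d k1 k2 a b :
  (forall k, K k -> d <= normsq (x - k)) -> K (2^-1 *: (k1 + k2)) ->
  normsq (x - k1) < d + a -> normsq (x - k2) < d + b ->
  normsq (k1 - k2) <= 2 * a + 2 * b.
Proof.
move=> dK /dK d_mid h1 h2.
have := normsq_parallelogram Hh (x - k2) (x - k1).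
have -> : x - k2 + (x - k1) = 2 *: (x - 2^-1 *: (k1 + k2)).
  rewrite scalerBr scalerA mulfV ?pnatr_eq0 // scale1r scalerDl scale1r opprD.
  by rewrite addrACA [- k2 + _]addrC.
have -> : x - k2 - (x - k1) = k1 - k2.
  by rewrite opprB addrC addrA subrK.
rewrite normsqZ // /abs2 /=.
lra.
Qed.

Lemma normsq_le_of_approx x (d : R) : 0 <= d ->
  (forall eps, 0 < eps -> exists y, normsq y < d + eps /\ normsq (x - y) < eps) ->
  normsq x <= d.
Proof.
move=> d_ge0 approx; apply/ler_addgt0Pr => del del_gt0.
pose s := del / 2 / (d + 1).
have s_gt0 : 0 < s by rewrite !divr_gt0 // ltr_wpDl.
have sd : s * d <= del / 2.
  have : s * (d + 1) = del / 2 by rewrite /s mulfVK // gt_eqF // ltr_wpDl.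
  lra.
pose c := 2 + s + s^-1.
have c_gt0 : 0 < c by rewrite /c !addr_gt0 // invr_gt0.
have [y [hy hxy]] := approx (del / 2 / c) (divr_gt0 (divr_gt0 del_gt0 (ltr0n _ 2)) c_gt0).
have := normsqD_le Hh y (x - y) s_gt0; rewrite addrC subrK.
have h1 : (1 + s) * normsq y <= (1 + s) * (d + del / 2 / c).
  by apply: ler_wpM2l; [rewrite addr_ge0 // ltW | exact: ltW].
have h2 : (1 + s^-1) * normsq (x - y) <= (1 + s^-1) * (del / 2 / c).
  by apply: ler_wpM2l; [rewrite addr_ge0 // ltW // invr_gt0 | exact: ltW].
have : del / 2 / c * c = del / 2 by rewrite divfK // gt_eqF.
have : (1 + s) * (d + del / 2 / c) + (1 + s^-1) * (del / 2 / c) = d + s * d + del / 2 / c * c.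
  by rewrite /c; ring.
lra.
Qed.

Section BoundedFunctional.
Variables (f : V -> C) (M : R).
Hypothesis f_lin : forall a x y, (f : V -> C^o) (a *: x + y) = a *: f x + f y.
Hypothesis f_bounded : forall x, abs2 (f x) <= M * normsq x.

Let f0 : f 0 = 0 := linop0 f_lin.
Let fD x y : f (x + y) = f x + f y := linopD f_lin x y.
Let fZ a x : f (a *: x) = a * f x := linopZ f_lin a x.
Let fB x y : f (x - y) = f x - f y := linopB f_lin x y.

Lemma functional_kernel_closed u l :
  (forall n, f (u n) = 0) -> normsq_cvg u l -> f l = 0.
Proof.
move=> fu0 ul; apply: abs2_eq0; apply/eqP; rewrite eq_le abs2_ge0 andbT.
apply/ler_addgt0Pr => eps eps_gt0; rewrite add0r.
have M1_gt0 : 0 < `|M| + 1 by rewrite ltr_wpDl.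
have [N uN] := ul _ (divr_gt0 eps_gt0 M1_gt0).
have -> : abs2 (f l) = abs2 (f (u N - l)) by rewrite fB fu0 sub0r abs2N.
apply: le_trans (f_bounded _) _.
apply: (@le_trans _ _ ((`|M| + 1) * normsq (u N - l))).
  by rewrite ler_wpM2r ?normsq_ge0 // (le_trans (ler_norm M)) ?lerDl.
rewrite -ler_pdivlMl // mulrC ltW //; exact: uN.
Qed.

Lemma functional_kernel_best_approx x0 :
  exists2 l, f l = 0 & forall k, f k = 0 -> normsq (x0 - l) <= normsq (x0 - k).
Proof.
pose D : set R := fun r => exists2 k, f k = 0 & r = normsq (x0 - k).
have D0 : D (normsq (x0 - 0)) by exists 0.
have D_ge0 r : D r -> 0 <= r by case=> k _ ->; exact: normsq_ge0.
have hD : has_inf D by split; [exists (normsq (x0 - 0)) | exists 0].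
have dlb k : f k = 0 -> inf D <= normsq (x0 - k).
  by move=> fk; apply: (ge_inf hD.2); exists k.
have d_ge0 : 0 <= inf D by apply: lb_le_inf => //; exists (normsq (x0 - 0)).
have near_inf n : exists k, f k = 0 /\ normsq (x0 - k) < inf D + (n.+1%:R)^-1.
  have e_gt0 : 0 < (n.+1%:R : R)^-1 by rewrite invr_gt0.
  have [_ [k fk ->] lt] := inf_adherent e_gt0 hD.
  by exists k.
have [ks hks] := boolp.choice near_inf.
have ks_cauchy : normsq_cauchy ks.
  move=> eps eps_gt0; have [N hN] := inv_succ_lt (divr_gt0 eps_gt0 (ltr0n _ 4)).
  exists N => m n le_Nm le_Nn.
  have f_mid : f (2^-1 *: (ks m + ks n)) = 0 by rewrite fZ fD (hks m).1 (hks n).1 addr0 mulr0.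
  have := normsq_sub_le_near_inf (K := fun k => f k = 0) dlb f_mid (hks m).2 (hks n).2.
  have := hN m le_Nm; have := hN n le_Nn.
  have : eps / 4 * 4 = eps by rewrite divfK // pnatr_eq0.
  move: (eps / 4) (m.+1%:R^-1) (n.+1%:R^-1) => e em en *; lra.
have [l ks_l] := normsq_cauchy_cvg ks_cauchy.
exists l; first by apply: (functional_kernel_closed (u := ks)) => // n; case: (hks n).
move=> k fk; apply: le_trans (dlb k fk).
apply: normsq_le_of_approx d_ge0 _ => eps eps_gt0.
have [N1 hN1] := ks_l eps eps_gt0; have [N2 hN2] := inv_succ_lt eps_gt0.
exists (x0 - ks (maxn N1 N2)); split.
  by apply: lt_le_trans (hks _).2 _; rewrite lerD2l ltW // hN2 // leq_maxr.
by rewrite opprB addrC addrA subrK; apply: hN1; rewrite leq_maxl.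
Qed.

Lemma ip_eq0_of_normsq_min z k :
  (forall t : C, normsq z <= normsq (z + t *: k)) -> ip z k = 0.
Proof.
move=> zmin; have [] // := @ge0_quadC_lin_eq0 _ (ip z k) ((ip z k)^*) (ip k k).
move=> t; have := zmin t; rewrite -lecR -!ip_normsq // ip_expand // -subr_ge0.
by rewrite -!addrA addrC !addrA subrK.
Qed.

Lemma riesz_representation : exists w, forall x, f x = ip x w.
Proof.
have [f_eq0|] := pselect (forall x, f x = 0).
  by exists 0 => x; rewrite f_eq0 ip0r.
move=> /existsNP[x0 /eqP fx0].
have [l fl lmin] := functional_kernel_best_approx x0.
pose z := x0 - l.
have z_orth k : f k = 0 -> ip z k = 0.
  move=> fk; apply: ip_eq0_of_normsq_min => t.
  have -> : z + t *: k = x0 - (l - t *: k) by rewrite /z opprB addrA addrAC.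
  by apply: lmin; rewrite fB fZ fl fk mulr0 subr0.
have fz : f z != 0 by rewrite /z fB fl subr0.
have zz_neq0 : ip z z != 0.
  by apply: contra fz => /eqP/(ip_eq0 Hh) ->; rewrite f0.
exists ((f z / ip z z)^* *: z) => x.
have := z_orth (x - (f x / f z) *: z); rewrite fB fZ mulfVK // subrr => /(_ erefl).
rewrite ipBr // ipZr // => /eqP; rewrite subr_eq0 => /eqP zx.
rewrite ipZr // conjCK (ipC Hh x z) zx rmorphM /= conjCK -(ipC Hh z z).
field.
by rewrite zz_neq0 fz.
Qed.

End BoundedFunctional.

End Riesz.

Section Adjoints.
Variable R : realType.
Local Notation C := R[i].
Variable V : lmodType C.
Variable ip : V -> V -> C.
Hypothesis Hh : is_hilbert ip.
Local Notation op := (op V).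
Local Notation normsq := (normsq ip).
Local Notation bounded := (bounded_op ip).

Lemma bounded_normsq (T : op) :
  bounded T -> exists M : R, 0 <= M /\ forall x, normsq (T x) <= M * normsq x.
Proof.
case=> _ [[a b] hM]; exists `|a|; split => // x.
have := hM x; rewrite !ip_normsq // lecE => /andP[_] /=.
rewrite mulr0 subr0 => /le_trans; apply.
by rewrite ler_wpM2r ?normsq_ge0 ?ler_norm.
Qed.

Lemma bounded_of_normsq (T : op) (M : R) :
  linear_op T -> (forall x, normsq (T x) <= M * normsq x) -> bounded T.
Proof.
move=> T_lin TM; split => //; exists M%:C%C => x.
by rewrite !ip_normsq // -rmorphM /= lecR.
Qed.

Lemma adjoint_exists (T : op) : bounded T -> exists T', is_adjoint ip T T'.
Proof.
move=> bT; have [M [M_ge0 TM]] := bounded_normsq bT.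
have repr y : exists w, forall x, ip (T x) y = ip x w.
  apply: (@riesz_representation _ _ _ Hh _ (M * normsq y)).
    by move=> a x z; rewrite bT.1; exact: ip_linl.
  move=> x; apply: le_trans (cauchy_schwarz Hh (T x) y) _.
  by rewrite mulrAC ler_wpM2r ?normsq_ge0.
have [T' hT'] := boolp.choice repr.
by exists T' => x y; rewrite hT'.
Qed.

Lemma adjP (T : op) : bounded T -> is_adjoint ip T (adj ip T).
Proof. by move=> bT; apply: epsilon_spec; exact: adjoint_exists. Qed.

Lemma adj_eq (T T' : op) : bounded T -> is_adjoint ip T T' -> adj ip T = T'.
Proof.
move=> bT hT'; apply: functional_extensionality_dep => y.
by apply: (ip_inj_r Hh) => x; rewrite -(adjP bT) hT'.
Qed.

Lemma is_adjoint_sym (T T' : op) : is_adjoint ip T T' -> is_adjoint ip T' T.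
Proof. by move=> hT' x y; rewrite (ipC Hh) -hT' -(ipC Hh). Qed.

Lemma linear_adj (T : op) : bounded T -> linear_op (adj ip T).
Proof.
move=> bT a x y; apply: (ip_inj_r Hh) => z.
by rewrite -(adjP bT) !(ipDr Hh) !(ipZr Hh) -!(adjP bT).
Qed.

Lemma bounded_adj (T : op) : bounded T -> bounded (adj ip T).
Proof.
move=> bT; have [M [M_ge0 TM]] := bounded_normsq bT.
apply: (bounded_of_normsq (M := M)); first exact: linear_adj.
move=> y; set w := adj ip T y.
have := cauchy_schwarz Hh (T w) y.
rewrite (adjP bT) ip_normsq // abs2_real.
move/le_trans => /(_ _ (ler_wpM2r (normsq_ge0 Hh y) (TM w))).
have := normsq_ge0 Hh w; have := mulr_ge0 M_ge0 (normsq_ge0 Hh y).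
by move: (normsq w) (normsq y) => nw ny *; nra.
Qed.

Lemma bounded_closed_star_subalg : closed_star_subalg ip bounded.
Proof.
split=> //; split.
- move=> T U bT bU; have [M1 [_ h1]] := bounded_normsq bT.
  have [M2 [_ h2]] := bounded_normsq bU.
  apply: (bounded_of_normsq (M := 2 * M1 + 2 * M2)).
    by move=> a x y; rewrite /addop bT.1 bU.1 scalerDr addrACA.
  move=> x; rewrite /addop.
  have := normsq_parallelogram Hh (T x) (U x); have := normsq_ge0 Hh (T x - U x).
  have := h1 x; have := h2 x.
  by move: (normsq x) (normsq (T x)) (normsq (U x)) (normsq (T x - U x)) (normsq (T x + U x)) => *; nra.
- move=> c T bT; have [M [_ hM]] := bounded_normsq bT.
  apply: (bounded_of_normsq (M := abs2 c * M)).
    by move=> a x y; rewrite /scaleop bT.1 scalerDr !scalerA mulrC.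
  by move=> x; rewrite /scaleop normsqZ // -mulrA ler_wpM2l ?abs2_ge0.
- move=> T U bT bU; have [M1 [M1_ge0 h1]] := bounded_normsq bT.
  have [M2 [_ h2]] := bounded_normsq bU.
  apply: (bounded_of_normsq (M := M1 * M2)).
    by move=> a x y; rewrite /mulop bU.1 bT.1.
  by move=> x; rewrite /mulop -mulrA (le_trans (h1 _)) // ler_wpM2l.
- exact: bounded_adj.
- by [].
Qed.

Lemma adj_scale_id (c : C) : adj ip (scaleop c (@idop R V)) = scaleop c^* (@idop R V).
Proof.
apply: adj_eq; last by move=> x y; rewrite /scaleop /idop (ipZl Hh) (ipZr Hh) conjCK.
apply: (bounded_of_normsq (M := abs2 c)) => [a x y | x].
  by rewrite /scaleop /idop scalerDr !scalerA mulrC.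
by rewrite /scaleop /idop normsqZ.
Qed.

End Adjoints.

Section StarSubalgebra.
Variable R : realType.
Local Notation C := R[i].
Variable V : lmodType C.
Variable ip : V -> V -> C.
Hypothesis Hh : is_hilbert ip.
Local Notation op := (op V).
Variable A : op -> Prop.
Hypothesis hA : closed_star_subalg ip A.

Lemma csa_bounded x : A x -> bounded_op ip x. Proof. by case: hA => h _; exact: h. Qed.
Lemma csa_linear x : A x -> linear_op x. Proof. by case/csa_bounded. Qed.
Lemma csa_add x y : A x -> A y -> A (addop x y).
Proof. by case: hA => _ [h _ _ _ _]; exact: h. Qed.
Lemma csa_scale c x : A x -> A (scaleop c x).
Proof. by case: hA => _ [_ h _ _ _]; exact: h. Qed.
Lemma csa_mul x y : A x -> A y -> A (mulop x y).
Proof. by case: hA => _ [_ _ h _ _]; exact: h. Qed.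
Lemma csa_adj x : A x -> A (adj ip x).
Proof. by case: hA => _ [_ _ _ h _]; exact: h. Qed.

Lemma csa_adjP x : A x -> is_adjoint ip x (adj ip x).
Proof. by move/csa_bounded; exact: adjP. Qed.

Lemma csa_adjK x : A x -> adj ip (adj ip x) = x.
Proof.
move=> Ax; apply: adj_eq => //; first exact/csa_bounded/csa_adj.
exact/is_adjoint_sym/csa_adjP.
Qed.

Lemma csa_sum k (F : 'I_k -> op) :
  A (@idop R V) -> (forall j, A (F j)) -> A (fun v => \sum_(j < k) F j v).
Proof.
move=> A1; elim: k F => [|k IH] F AF.
  have -> : (fun v => \sum_(j < 0) F j v) = scaleop 0 (@idop R V).
    by apply: funext => v; rewrite big_ord0 /scaleop scale0r.
  exact: csa_scale.
have -> : (fun v => \sum_(j < k.+1) F j v) =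
    addop (fun v => \sum_(j < k) F (widen_ord (leqnSn k) j) v) (F ord_max).
  by apply: funext => v; rewrite big_ord_recr.
by apply: csa_add; [apply: IH => j |].
Qed.

End StarSubalgebra.

Lemma cstar_gen_closed (R : realType) (V : lmodType R[i]) (ip : V -> V -> R[i])
    (I : Type) (S : I -> op V) :
  is_hilbert ip -> (forall i, bounded_op ip (S i)) -> closed_star_subalg ip (cstar_gen ip S).
Proof.
move=> Hh bS; split.
  by move=> T; apply; [exact: bounded_closed_star_subalg | exact: bS].
split=> [T U hT hU | c T hT | T U hT hU | T hT | T bT approx] P hP PS.
- by have [_ [h _ _ _ _]] := hP; apply: h; [exact: hT | exact: hU].
- by have [_ [_ h _ _ _]] := hP; apply: h; exact: hT.
- by have [_ [_ _ h _ _]] := hP; apply: h; [exact: hT | exact: hU].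
- by have [_ [_ _ _ h _]] := hP; apply: h; exact: hT.
- have [_ [_ _ _ _ h]] := hP; apply: h => // eps eps_gt0.
  by have [U [hU TU]] := approx eps eps_gt0; exists U; split => //; exact: hU.
Qed.

Section CompletelyPositive.
Variable R : realType.
Local Notation C := R[i].
Variable V : lmodType C.
Variable ip : V -> V -> C.
Hypothesis Hh : is_hilbert ip.
Local Notation op := (op V).
Local Notation id1 := (@idop R V).
Variable A : op -> Prop.
Hypothesis hA : closed_star_subalg ip A.

Lemma cp_map_id : cp_map ip A id.
Proof. by split. Qed.

Lemma cp_map_Ad_comp (a : op) (Psi : op -> op) :
  A a -> cp_map ip A Psi -> cp_map ip A (fun x => Ad ip a (Psi x)).
Proof.
move=> Aa [PsiA Psi_lin Psi_pos]; split.
- move=> x Ax; apply: (csa_mul hA) => //.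
  by apply: (csa_mul hA); [exact: PsiA | exact: (csa_adj hA)].
- move=> c x y Ax Ay; rewrite Psi_lin //; apply: funext => v.
  by rewrite /Ad /mulop /addop /scaleop (csa_linear hA Aa).
- move=> k X AX Xpos xi.
  under eq_bigr => i _ do under eq_bigr => j _ do rewrite /Ad /mulop (csa_adjP Hh hA Aa).
  exact: (Psi_pos k X AX Xpos (fun j => adj ip a (xi j))).
Qed.

(* The matrix [[1, x], [x^*, x^* x]] = [1 x]^* [1 x]. *)
Definition gram2 (x : op) : 'I_2 -> 'I_2 -> op := fun p q =>
  match val p, val q with
  | 0, 0 => id1
  | 0, _ => x
  | _, 0 => adj ip x
  | _, _ => mulop (adj ip x) x
  end%N.

Lemma pos_mx_gram2 x : A x -> pos_mx ip (gram2 x).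
Proof.
move=> Ax xi; rewrite !big_ord_recl !big_ord0 /= !addr0 /gram2 /=.
rewrite (is_adjoint_sym Hh (csa_adjP Hh hA Ax)) /mulop (is_adjoint_sym Hh (csa_adjP Hh hA Ax)).
have := ip_ge0 Hh (xi ord0 + x (xi (lift ord0 ord0))).
by rewrite (ipDl Hh) !(ipDr Hh) /idop addrACA.
Qed.

Lemma cp_map_gram2_ge0 (theta : op -> op) x u w :
  A id1 -> A x -> cp_map ip A theta ->
  0 <= ip (theta id1 u) u + ip (theta x w) u + ip (theta (adj ip x) u) w +
       ip (theta (mulop (adj ip x) x) w) w.
Proof.
move=> A1 Ax [_ _ theta_pos].
have AX p q : A (gram2 x p q).
  rewrite /gram2; case: (val p) => [|?]; case: (val q) => [|?] //;
  by [exact: (csa_adj hA) | apply: (csa_mul hA) => //; exact: (csa_adj hA)].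
have := theta_pos 2 _ AX (pos_mx_gram2 Ax) (fun q => if val q == 0%N then u else w).
by rewrite /pos_mx !big_ord_recl !big_ord0 /= !addr0 !addrA.
Qed.

End CompletelyPositive.

Definition unital_star_hom (R : realType) (V : lmodType R[i]) (ip : V -> V -> R[i])
    (A : op V -> Prop) (F : op V -> op V) : Prop :=
  [/\ F (@idop R V) = @idop R V,
      forall x y, A x -> A y -> F (mulop x y) = mulop (F x) (F y) &
      forall x, A x -> is_adjoint ip (F x) (F (adj ip x))].

Section DominatedByStarHom.
Variable R : realType.
Local Notation C := R[i].
Variable V : lmodType C.
Variable ip : V -> V -> C.
Hypothesis Hh : is_hilbert ip.
Local Notation op := (op V).
Local Notation id1 := (@idop R V).
Variables (A : op -> Prop) (F : op -> op).
Hypotheses (hA : closed_star_subalg ip A) (A1 : A id1) (hF : unital_star_hom ip A F).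
Variables (m : nat) (theta : 'I_m -> op -> op).
Hypothesis theta_cp : forall i, cp_map ip A (theta i).
Hypothesis theta_sum : eq_on A F (fun x v => \sum_(i < m) theta i x v).

Let gram2_form i x u w : C :=
  ip (theta i id1 u) u + ip (theta i x w) u + ip (theta i (adj ip x) u) w +
  ip (theta i (mulop (adj ip x) x) w) w.

Let theta_linear i x : A x -> linear_op (theta i x).
Proof. by move=> Ax; apply: (csa_linear hA); case: (theta_cp i) => h _ _; exact: h. Qed.

(* Summed over [i], the form is [ip (u + F x w) (u + F x w)]. *)
Lemma gram2_form_eq0 i x w : A x -> gram2_form i x (- F x w) w = 0.
Proof.
move=> Ax; have [F1 FM Fadj] := hF.
have Axa := csa_adj hA Ax; have Axx := csa_mul hA Axa Ax.
suff sum_eq0 : \sum_(j < m) gram2_form j x (- F x w) w = 0.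
  exact: (psumr_eq0P (fun j _ => cp_map_gram2_ge0 Hh hA _ _ A1 Ax (theta_cp j)) sum_eq0).
have sum_theta y v : A y -> \sum_(j < m) theta j y v = F y v by move=> Ay; rewrite (theta_sum Ay).
rewrite /gram2_form !big_split /= -!(ip_suml Hh) !sum_theta // F1 FM // /mulop /idop.
rewrite (Fadj _ Axa) (csa_adjK Hh hA Ax) (Fadj _ Axa) (csa_adjK Hh hA Ax).
by rewrite !(ipNl Hh) !(ipNr Hh) opprK subrr add0r addNr.
Qed.

Lemma gram2_form_lin_eq0 i x w eta : A x ->
  ip (theta i id1 (- F x w)) eta + ip (theta i x w) eta = 0 /\
  ip (theta i id1 eta) (- F x w) + ip (theta i (adj ip x) eta) w = 0.
Proof.
move=> Ax; apply: (ge0_quadC_lin_eq0 (c := ip (theta i id1 eta) eta)) => t.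
have := cp_map_gram2_ge0 Hh hA (- F x w + t *: eta) w A1 Ax (theta_cp i).
have lin1 := theta_linear i A1; have linxa := theta_linear i (csa_adj hA Ax).
rewrite (linopD lin1) (linopZ lin1) (linopD linxa) (linopZ linxa).
rewrite !(ipDl Hh) !(ipDr Hh) !(ipZl Hh) !(ipZr Hh).
set E := (X in 0 <= X) => E_ge0.
have := gram2_form_eq0 i w Ax; rewrite /gram2_form; set Z := (X in X = 0) => Z0.
suff -> : t^* * (ip (theta i id1 (- F x w)) eta + ip (theta i x w) eta) +
    t * (ip (theta i id1 eta) (- F x w) + ip (theta i (adj ip x) eta) w) +
    t * t^* * ip (theta i id1 eta) eta = E - Z by rewrite Z0 subr0.
by rewrite /E /Z; ring.
Qed.

Lemma cp_summand_mulr i x : A x -> theta i x = mulop (theta i id1) (F x).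
Proof.
move=> Ax; apply: funext => w.
have [h _] := gram2_form_lin_eq0 i w (theta i id1 (- F x w) + theta i x w) Ax.
move: h; rewrite -(ipDl Hh) (linopN (theta_linear i A1)) => /(ip_eq0 Hh)/eqP.
by rewrite addrC subr_eq0 => /eqP.
Qed.

Lemma cp_summand_mull i x : A x -> theta i x = mulop (F x) (theta i id1).
Proof.
move=> Ax; have [_ _ Fadj] := hF.
apply: funext => eta; apply: (ip_inj_l Hh) => w.
have [_ /eqP] := gram2_form_lin_eq0 i w eta (csa_adj hA Ax).
rewrite (csa_adjK Hh hA Ax) (ipNr Hh) addrC subr_eq0 => /eqP ->.
by rewrite /mulop (Fadj _ Ax).
Qed.

End DominatedByStarHom.

Lemma operational_extreme_unital_star_hom (R : realType) (V : lmodType R[i])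
    (ip : V -> V -> R[i]) (A : op V -> Prop) (F : op V -> op V) :
  is_hilbert ip -> closed_star_subalg ip A -> A (@idop R V) ->
  cp_map ip A F -> unital_star_hom ip A F -> operational_extreme ip A F.
Proof.
move=> Hh hA A1 F_cp hF; split=> // m a Psi [Psi_cp Aa _ _ F_sum].
pose theta i x := Ad ip (a i) (Psi i x).
have theta_cp i : cp_map ip A (theta i) by apply: cp_map_Ad_comp.
exists (fun i => theta i (@idop R V)) => i; split; last first.
  by move=> x Ax; exact: (cp_summand_mulr Hh hA A1 hF theta_cp).
split; first by apply: (csa_bounded hA); case: (theta_cp i) => h _ _; exact: h.
move=> x Ax.
by rewrite -(cp_summand_mulr Hh hA A1 hF theta_cp) // -(cp_summand_mull Hh hA A1 hF theta_cp).
Qed.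

Lemma infinite_dim_nontrivial (R : realType) (V : lmodType R[i]) :
  infinite_dim V -> exists w : V, w != 0.
Proof.
case/(_ 1%N) => v hv; exists (v ord0); apply/eqP => v0.
have := hv (fun _ => 1); rewrite big_ord1 scale1r v0 => /(_ erefl ord0) /eqP.
by rewrite oner_eq0.
Qed.

Section Cuntz.
Variable R : realType.
Local Notation C := R[i].
Variable V : lmodType C.
Variable ip : V -> V -> C.
Hypothesis Hh : is_hilbert ip.
Hypothesis V_nontrivial : exists w : V, w != 0.
Variables (n : nat) (S : 'I_n -> op V).
Hypothesis n_gt1 : (1 < n)%N.
Hypothesis S_bounded : forall i, bounded_op ip (S i).
Hypothesis S_isometry : forall i, mulop (adj ip (S i)) (S i) = @idop R V.
Hypothesis S_sum : (fun v => \sum_(i < n) S i (adj ip (S i) v)) = @idop R V.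
Local Notation op := (op V).
Local Notation id1 := (@idop R V).
Local Notation On := (cstar_gen ip S).
Local Notation Sa i := (adj ip (S i)).
Local Notation Phi := (PhiN ip S).
Local Notation Psi := (PsiN ip S).
Local Notation P i := (mulop (S i) (Sa i)).

Let On_csa : closed_star_subalg ip On := cstar_gen_closed Hh S_bounded.
Let i0 : 'I_n := Ordinal (ltnW n_gt1).
Let i1 : 'I_n := Ordinal n_gt1.
Let i01 : i0 != i1 := erefl.

Lemma On_S i : On (S i). Proof. by move=> A _; apply. Qed.
Lemma On_adjS i : On (Sa i). Proof. exact: (csa_adj On_csa (On_S i)). Qed.
Lemma On_range_proj i : On (P i). Proof. exact: (csa_mul On_csa (On_S i) (On_adjS i)). Qed.
Lemma On_id : On id1.
Proof. by rewrite -(S_isometry i0); exact: (csa_mul On_csa (On_adjS i0) (On_S i0)). Qed.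

Lemma adjS_S i w : Sa i (S i w) = w.
Proof. exact: (congr1 (fun T => T w) (S_isometry i)). Qed.

Lemma S_linear i : linear_op (S i). Proof. exact: (S_bounded i).1. Qed.
Lemma adjS_linear i : linear_op (Sa i). Proof. exact: (linear_adj Hh (S_bounded i)). Qed.

Lemma S_neq0 i w : w != 0 -> S i w != 0.
Proof.
by apply: contra => /eqP Sw0; rewrite -(adjS_S i w) Sw0 (linop0 (adjS_linear i)).
Qed.

(* Pythagoras for [v = \sum_k S_k S_k^* v] with [v = S_j w] forces [S_i^* S_j w] to vanish. *)
Lemma adjS_S_neq i j w : i != j -> Sa i (S j w) = 0.
Proof.
move=> ij; set v := S j w.
have v_sum : \sum_(k < n) S k (Sa k v) = v by have := congr1 (fun T => T v) S_sum.
have vv_sum : ip v v = \sum_(k < n) ip (Sa k v) (Sa k v).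
  by rewrite -{1}v_sum (ip_suml Hh); apply: eq_bigr => k _; rewrite (adjP Hh (S_bounded k)).
have vv : ip v v = ip (Sa j v) (Sa j v) by rewrite /v (adjP Hh (S_bounded j)) !adjS_S.
rewrite vv_sum (bigD1 j) //= in vv.
have rest0 : \sum_(k < n | k != j) ip (Sa k v) (Sa k v) = 0.
  by apply: (@addrI _ (ip (Sa j v) (Sa j v))); rewrite addr0.
exact: (ip_eq0 Hh (psumr_eq0P (fun k _ => ip_ge0 Hh (Sa k v)) rest0 ij)).
Qed.

Lemma PhiN_S x i w : linear_op x -> Phi x (S i w) = S i (x w).
Proof.
move=> x_lin; rewrite /PhiN (bigD1 i) //= adjS_S big1 ?addr0 // => j ji.
by rewrite adjS_S_neq // (linop0 x_lin) (linop0 (S_linear j)).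
Qed.

Lemma adjS_PhiN x i v : Sa i (Phi x v) = x (Sa i v).
Proof.
rewrite /PhiN (linop_sum (adjS_linear i)) (bigD1 i) //= adjS_S big1 ?addr0 // => j ji.
by rewrite adjS_S_neq // eq_sym.
Qed.

Lemma PhiN_id : Phi id1 = id1. Proof. exact: S_sum. Qed.

Lemma PhiN_unital_star_hom : unital_star_hom ip On Phi.
Proof.
split=> [|x y _ _|x Ax u v]; first exact: PhiN_id.
  by apply: funext => v; rewrite /mulop {2}/PhiN; apply: eq_bigr => j _; rewrite adjS_PhiN.
rewrite /PhiN (ip_suml Hh) (ip_sumr Hh); apply: eq_bigr => j _.
rewrite (adjP Hh (S_bounded j)) (csa_adjP Hh On_csa Ax).
exact: (is_adjoint_sym Hh (adjP Hh (S_bounded j))).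
Qed.

Lemma cp_PhiN : cp_map ip On Phi.
Proof.
split.
- move=> x Ax; apply: (csa_sum On_csa On_id) => j.
  exact: (csa_mul On_csa (On_S j) (csa_mul On_csa Ax (On_adjS j))).
- move=> c x y Ax Ay; apply: funext => v.
  rewrite /PhiN /addop /scaleop scaler_sumr -big_split /=; apply: eq_bigr => j _.
  exact: S_linear.
- move=> k X AX Xpos xi.
  have -> : \sum_(a < k) \sum_(b < k) ip (Phi (X a b) (xi b)) (xi a) =
      \sum_(j < n) \sum_(a < k) \sum_(b < k) ip (X a b (Sa j (xi b))) (Sa j (xi a)).
    rewrite [RHS]exchange_big /=; apply: eq_bigr => a _.
    rewrite [RHS]exchange_big /=; apply: eq_bigr => b _.
    rewrite /PhiN (ip_suml Hh); apply: eq_bigr => j _; exact: (adjP Hh (S_bounded j)).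
  by apply: sumr_ge0 => j _; exact: (Xpos (fun b => Sa j (xi b))).
Qed.

Lemma range_proj_not_scalar i j c : i != j -> P i <> scaleop c id1.
Proof.
move=> ij Pc; have [w w_neq0] := V_nontrivial.
have := congr1 (fun T => T (S j w)) Pc; rewrite /= /mulop /scaleop /idop.
rewrite adjS_S_neq // (linop0 (S_linear i)) => /eqP.
rewrite eq_sym scaler_eq0 (negbTE (S_neq0 j w_neq0)) orbF => /eqP c0.
have := congr1 (fun T => T (S i w)) Pc; rewrite /= /mulop /scaleop adjS_S c0 scale0r.
by move/eqP; rewrite (negbTE (S_neq0 i w_neq0)).
Qed.

Lemma range_proj_commutant i : commutant_range ip On Phi (P i).
Proof.
split; first exact: (csa_bounded On_csa (On_range_proj i)).
move=> x Ax; apply: funext => v.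
by rewrite /mulop adjS_PhiN PhiN_S //; exact: (csa_linear On_csa).
Qed.

Theorem PhiN_not_irreducible : ~ (forall z, commutant_range ip On Phi z <-> scalar_op z).
Proof.
move=> irr; have [c Pc] := (irr _).1 (range_proj_commutant i0).
exact: range_proj_not_scalar i01 Pc.
Qed.

Theorem PhiN_operational_extreme : operational_extreme ip On Phi.
Proof.
exact: (operational_extreme_unital_star_hom Hh On_csa On_id cp_PhiN PhiN_unital_star_hom).
Qed.

Theorem PhiN_not_numerical_operational_extreme : ~ numerical_operational_extreme ip On Phi.
Proof.
case=> _ /(_ n S (fun _ x => x)) [].
  split=> [i | i | i S0 | |]; [exact: cp_map_id | exact: On_S | | exact: S_sum | by []].
  have [w /(S_neq0 i)] := V_nontrivial.
  by rewrite S0 eqxx.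
move=> lam /(_ i0) [_ /(_ id1 On_id)].
by rewrite /= PhiN_id; exact: range_proj_not_scalar i01.
Qed.

Let n_neq0 : (n%:R : C) != 0.
Proof. by rewrite pnatr_eq0 -lt0n ltnW. Qed.

Lemma PsiN_id : Psi id1 = id1.
Proof.
apply: funext => v; rewrite /PsiN /idop (eq_bigr (fun=> v)) => [|i _]; last exact: adjS_S.
by rewrite sumr_const card_ord -scalerMnr scalerMnl -mulr_natr mulVf // scale1r.
Qed.

Lemma PsiN_range_proj j : Psi (P j) = scaleop n%:R^-1 id1.
Proof.
apply: funext => v; rewrite /PsiN /mulop (bigD1 j) //= !adjS_S big1 ?addr0 // => i ij.
by rewrite adjS_S_neq.
Qed.

Lemma range_proj_adj j : adj ip (P j) = P j.
Proof.
apply: adj_eq => //; first exact: (csa_bounded On_csa (On_range_proj j)).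
move=> u v; rewrite /mulop (adjP Hh (S_bounded j)).
exact: (is_adjoint_sym Hh (adjP Hh (S_bounded j))).
Qed.

Lemma range_proj_idem j : mulop (P j) (P j) = P j.
Proof. by apply: funext => v; rewrite /mulop adjS_S. Qed.

Theorem PsiN_not_jordan_hom : ~ jordan_hom ip On Psi.
Proof.
case=> _ _ /(_ _ (On_range_proj i0) (range_proj_adj i0)).
rewrite range_proj_idem !PsiN_range_proj; have [w w_neq0] := V_nontrivial.
move/(congr1 (fun T => T w)); rewrite /mulop /scaleop /idop scalerA => /eqP.
rewrite -subr_eq0 -scalerBl scaler_eq0 (negbTE w_neq0) orbF subr_eq0 => /eqP.
rewrite -[X in X = _]mulr1 => /(mulfI (invr_neq0 n_neq0)) /esym /eqP.
by rewrite invr_eq1 pnatr_eq1 => /eqP n1; move: n_gt1; rewrite n1.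
Qed.

Let c : C := sqrtC n%:R^-1.

Let c_conj : c^* = c.
Proof. by rewrite conj_Creal // ger0_real // sqrtC_ge0 invr_ge0 ler0n. Qed.

Let c_mul_conj : c * c^* = n%:R^-1.
Proof. by rewrite c_conj -expr2 sqrtCK. Qed.

Lemma Ad_scale_id (a : C) (y : op) :
  linear_op y -> Ad ip (scaleop a id1) y = scaleop (a * a^*) y.
Proof.
move=> y_lin; apply: funext => v.
by rewrite /Ad /mulop adj_scale_id // /scaleop /idop (linopZ y_lin) scalerA.
Qed.

Lemma Ad_adjS i x : Ad ip (Sa i) x = mulop (Sa i) (mulop x (S i)).
Proof. by rewrite /Ad (csa_adjK Hh On_csa (On_S i)). Qed.

Lemma PsiN_Ad_decomposition :
  cp_decomposition ip On Psi (fun _ => scaleop c id1) (fun i => Ad ip (Sa i)).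
Proof.
split=> [i | i | i c0 | | x Ax].
- exact: (cp_map_Ad_comp Hh On_csa (On_adjS i) (cp_map_id ip On)).
- exact: (csa_scale On_csa c On_id).
- have [w w_neq0] := V_nontrivial; have /eqP := congr1 (fun T => T w) c0.
  rewrite /scaleop /idop scaler_eq0 (negbTE w_neq0) orbF sqrtC_eq0 invr_eq0.
  by rewrite (negbTE n_neq0).
- apply: funext => v; rewrite adj_scale_id // /scaleop /idop.
  under eq_bigr do rewrite scalerA c_mul_conj.
  by rewrite sumr_const card_ord scalerMnl -mulr_natr mulVf // scale1r.
- apply: funext => v; rewrite /PsiN scaler_sumr; apply: eq_bigr => i _.
  rewrite Ad_adjS Ad_scale_id ?c_mul_conj //.
  exact: (csa_linear On_csa (csa_mul On_csa (On_adjS i) (csa_mul On_csa Ax (On_S i)))).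
Qed.

Theorem PsiN_not_operational_extreme : ~ operational_extreme ip On Psi.
Proof.
case=> _ /(_ _ _ _ PsiN_Ad_decomposition) [z /(_ i0) [_ z_eq]].
have z_inv v : z i0 v = n%:R^-1 *: v.
  have := congr1 (fun T => T v) (z_eq _ On_id); rewrite /= /mulop PsiN_id => <-.
  rewrite Ad_adjS Ad_scale_id ?c_mul_conj; last first.
    exact: (csa_linear On_csa (csa_mul On_csa (On_adjS i0) (csa_mul On_csa On_id (On_S i0)))).
  by rewrite /scaleop /mulop adjS_S.
have [w w_neq0] := V_nontrivial.
have := congr1 (fun T => T w) (z_eq _ (On_range_proj i1)).
rewrite /= /mulop PsiN_range_proj /scaleop /idop z_inv Ad_adjS Ad_scale_id; last first.
  exact: (csa_linear On_csa (csa_mul On_csa (On_adjS i0) (csa_mul On_csa (On_range_proj i1) (On_S i0)))).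
rewrite /scaleop /mulop adjS_S_neq // scaler0 => /eqP.
by rewrite eq_sym scalerA scaler_eq0 mulf_eq0 invr_eq0 (negbTE n_neq0) (negbTE w_neq0).
Qed.

End Cuntz.

Unset Implicit Arguments.

Theorem mainTheorem6 (R : realType) (V : lmodType R[i]) (ip : V -> V -> R[i])
  (n : nat) (S : 'I_n -> V -> V) :
  is_hilbert ip -> infinite_dim V -> (2 <= n)%N ->
  (forall i, bounded_op ip (S i)) ->
  (forall i, mulop (adj ip (S i)) (S i) = @idop R V) ->
  (fun v => \sum_(i < n) S i (adj ip (S i) v)) = @idop R V ->
  let On := cstar_gen ip S in
  [/\ ~ (forall z, commutant_range ip On (PhiN ip S) z <-> scalar_op z),
      operational_extreme ip On (PhiN ip S),
      ~ numerical_operational_extreme ip On (PhiN ip S),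
      ~ operational_extreme ip On (PsiN ip S) &
      ~ jordan_hom ip On (PsiN ip S)].
Proof.
move=> Hh /infinite_dim_nontrivial V_nontrivial n_gt1 S_bounded S_isometry S_sum On.
split.
- by apply: PhiN_not_irreducible.
- by apply: PhiN_operational_extreme.
- by apply: PhiN_not_numerical_operational_extreme.
- by apply: PsiN_not_operational_extreme.
- by apply: PsiN_not_jordan_hom.
Qed.
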